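(* Let $n\ge1$ and let $(A_1,A_2,A_3,A_4)$ be distinct nonempty subsets of $[n]$ with $\chi_{A_1}+\chi_{A_3}=\chi_{A_2}+\chi_{A_4}$ and $A_i\cap A_j\ne\emptyset$ for $1\le i<j\le 3$, where $A_4$ is the largest of the four in the binary order. Define $M=\bigcap_{i=1}^4A_i$ and $S_i=(A_i\cap A_{i+1})\setminus M$ for $1\le i\le 4$ (indices mod 4). Then $(S_1,S_2,S_3,S_4,M)$ is a side-midpoint tuple, i.e.: (S1) $S_i\cap S_j=\emptyset$ for all $i\ne j$; (S2) $M\cap S_i=\emptyset$ for all $i$; (S3) $M\ne\emptyset$; (S4) of each pair of opposite sides $\{S_1,S_3\}$, $\{S_2,S_4\}$, at most one is empty.
   Context: $\chi_A\in\{0,1\}^n$ denotes the characteristic vector of $A\subseteq[n]$. Binary order: a subset $I\subseteq[n]$ is encoded by $\sum_{j\in I}2^j$ and subsets are linearly ordered by this number. Indices of $A_i$ and $S_i$ are taken cyclically mod 4 ($A_5=A_1$, $S_0=S_4$). A side-midpoint tuple in $[n]$ is a tuple $(S_1,S_2,S_3,S_4,M)$ of subsets of $[n]$ satisfying (S1)–(S4). *)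

From mathcomp Require Import all_boot.
Set Implicit Arguments. Unset Strict Implicit. Unset Printing Implicit Defensive.

(* [n] is modelled as 'I_n = {0,...,n-1} (shift of {1,...,n}); subsets are {set 'I_n}. *)

Definition chi n (A : {set 'I_n}) (x : 'I_n) : nat := (x \in A).

Definition bincode n (A : {set 'I_n}) : nat := \sum_(j in A) 2 ^ j.

Definition bin_lt n (A B : {set 'I_n}) : bool := bincode A < bincode B.

Definition side_midpoint_tuple n (S1 S2 S3 S4 M : {set 'I_n}) : Prop :=
  let S := [:: S1; S2; S3; S4] in
  (forall i j : 'I_4, i != j -> nth set0 S i :&: nth set0 S j = set0) /\
  (forall i : 'I_4, M :&: nth set0 S i = set0) /\
  M != set0 /\
  ~ (S1 = set0 /\ S3 = set0) /\ ~ (S2 = set0 /\ S4 = set0).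

From mathcomp Require Import all_boot.

Set Implicit Arguments. Unset Strict Implicit. Unset Printing Implicit Defensive.

(* Read A1, A2, A3, A4 as the corners of a quadrilateral.
   The balance condition chi_A1 + chi_A3 = chi_A2 + chi_A4 is pointwise, and
   for four bits a1 + a3 = a2 + a4 leaves exactly six membership patterns:
   a point lies in no A_i, in all four (the midpoint M), or in exactly two
   cyclically adjacent sets A_i, A_(i+1) (the side S_i).  We record this
   classification once, as the reflection-style view [balanced_patternP], and
   each axiom of a side-midpoint tuple then becomes a pointwise case analysis:
   - two different sides never share a point, and no side meets M;
   - A1 :&: A3 = M, so M is nonempty as soon as A1 and A3 meet;
   - if the sides S1 and S3 are both empty then A2 = A3, and if S2 and S4
     are both empty then A1 = A2, which distinctness of the A_i forbids. *)

Definition balanced n (A1 A2 A3 A4 : {set 'I_n}) : Prop :=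
  forall x : 'I_n, chi A1 x + chi A3 x = chi A2 x + chi A4 x.

Variant quad_pattern : bool -> bool -> bool -> bool -> Prop :=
  | PatternOutside : quad_pattern false false false false
  | PatternMidpoint : quad_pattern true true true true
  | PatternSide12 : quad_pattern true true false false
  | PatternSide23 : quad_pattern false true true false
  | PatternSide34 : quad_pattern false false true true
  | PatternSide41 : quad_pattern true false false true.

Lemma quad_patternP (a1 a2 a3 a4 : bool) :
  a1 + a3 = a2 + a4 -> quad_pattern a1 a2 a3 a4.
Proof. by case: a1; case: a2; case: a3; case: a4 => // _; constructor. Qed.

Lemma setI_setD_self (T : finType) (M X : {set T}) : M :&: (X :\: M) = set0.
Proof. by rewrite setIDA setIC -setIDA setDv setI0. Qed.

Section BalancedQuadrilateral.

Variables (n : nat) (A1 A2 A3 A4 : {set 'I_n}).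
Hypothesis bal : balanced A1 A2 A3 A4.

Let M := A1 :&: A2 :&: A3 :&: A4.
Let S1 := (A1 :&: A2) :\: M.
Let S2 := (A2 :&: A3) :\: M.
Let S3 := (A3 :&: A4) :\: M.
Let S4 := (A4 :&: A1) :\: M.

Lemma balanced_patternP (x : 'I_n) :
  quad_pattern (x \in A1) (x \in A2) (x \in A3) (x \in A4).
Proof. by apply: quad_patternP; exact: bal. Qed.

(* (S1): distinct sides are disjoint, since a side pattern determines the
   side. *)
Lemma sides_disjoint (i j : 'I_4) : i != j ->
  nth set0 [:: S1; S2; S3; S4] i :&: nth set0 [:: S1; S2; S3; S4] j = set0.
Proof.
case: i j => [[|[|[|[|i]]]] Hi] // [[|[|[|[|j]]]] Hj] // _;
  apply/setP => x; rewrite !inE; by case: (balanced_patternP x).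
Qed.

Lemma diagonal_meet : A1 :&: A3 = M.
Proof. by apply/setP => x; rewrite !inE; case: (balanced_patternP x). Qed.

Lemma sides13_empty : S1 = set0 -> S3 = set0 -> A2 = A3.
Proof.
move=> /setP S1_0 /setP S3_0; apply/setP => x.
by move: (S1_0 x) (S3_0 x); rewrite !inE; case: (balanced_patternP x).
Qed.

Lemma sides24_empty : S2 = set0 -> S4 = set0 -> A1 = A2.
Proof.
move=> /setP S2_0 /setP S4_0; apply/setP => x.
by move: (S2_0 x) (S4_0 x); rewrite !inE; case: (balanced_patternP x).
Qed.

End BalancedQuadrilateral.

Theorem proposition7p6 (n : nat) (A1 A2 A3 A4 : {set 'I_n}) :
  1 <= n ->
  uniq [:: A1; A2; A3; A4] ->
  A1 != set0 -> A2 != set0 -> A3 != set0 -> A4 != set0 ->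
  (forall x : 'I_n, chi A1 x + chi A3 x = chi A2 x + chi A4 x) ->
  A1 :&: A2 != set0 -> A1 :&: A3 != set0 -> A2 :&: A3 != set0 ->
  bin_lt A1 A4 -> bin_lt A2 A4 -> bin_lt A3 A4 ->
  let M := A1 :&: A2 :&: A3 :&: A4 in
  side_midpoint_tuple ((A1 :&: A2) :\: M) ((A2 :&: A3) :\: M)
                      ((A3 :&: A4) :\: M) ((A4 :&: A1) :\: M) M.
Proof.
move=> _ uniqA _ _ _ _ bal _ A13_ne0 _ _ _ _ M.
have /andP [A12 A23] : (A1 != A2) && (A2 != A3).
  by move: uniqA; rewrite /= !inE !negb_or => /and4P [/and3P [-> _ _] /andP [-> _] _ _].
split; [exact: sides_disjoint | split; [|split; [|split]]].
- by case=> [[|[|[|[|i]]]] Hi] //=; rewrite setI_setD_self.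
- by rewrite /M -diagonal_meet.
- by case=> S1_0 S3_0; move/eqP: A23; apply; exact: sides13_empty.
- by case=> S2_0 S4_0; move/eqP: A12; apply; exact: sides24_empty.
Qed.
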